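(* Let $W\ge1$ and $1\le k^*\le W$ be integers, and let $A,B\in\mathbb{C}^{W\times W}$ be Hermitian positive semidefinite matrices such that: (1) (Hankel decay) there exist constants $C,\alpha>0$ with $\lambda_j(A)\le Ce^{-\alpha j}$ for all $j\ge1$; (2) (Slepian structure) there exist constants $C',c'>0$ with $\lambda_j(B)\le C'$ for $j\le k^*$ and $\sum_{j>k^*}\lambda_j(B)\le e^{-c'W}$. Then there exist constants $K,\alpha'>0$ depending only on $C,\alpha,C',c'$ such that for all integers $s\ge1$ with $sk^*+1\le W$, \[ \lambda_{sk^*+1}(A\circ B)\le Ke^{-\alpha' s}. \] In particular, for every $k$ with $k^*\le k\le W$, $\lambda_k(A\circ B)\le K\exp\!\big(-\alpha'\lfloor k/k^*\rfloor\big)$ (after possibly enlarging $K$).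
   Context: For a Hermitian matrix $M$, $\lambda_1(M)\ge\lambda_2(M)\ge\dots$ denote its eigenvalues in decreasing order. $A\circ B$ denotes the entrywise (Hadamard) product. *)

From HB Require Import structures.
From mathcomp Require Import all_boot all_order all_algebra.
From mathcomp Require Import complex.
From mathcomp Require Import reals sequences exp.
From Stdlib Require Import ClassicalEpsilon.
Set Implicit Arguments. Unset Strict Implicit. Unset Printing Implicit Defensive.
Import Order.TTheory GRing.Theory Num.Theory.
Local Open Scope ring_scope.
Local Open Scope complex_scope.

Section Defs.
Variable R : realType.

Definition adjmx m n (A : 'M[R[i]]_(m, n)) : 'M[R[i]]_(n, m) :=
  (map_mx Num.conj A)^T.

Definition hermitian n (A : 'M[R[i]]_n) : Prop := adjmx A = A.

(* Hermitian positive semidefinite: x^* A x >= 0 for every vector x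
   (in the order of R[i], 0 <= z means z is real and nonnegative) *)
Definition psd n (A : 'M[R[i]]_n) : Prop :=
  hermitian A /\ forall v : 'cV[R[i]]_n, 0 <= (adjmx v *m A *m v) 0 0.

(* eigenvalue lists: real sequences, sorted decreasingly, whose associated
   monic polynomial is the characteristic polynomial (i.e. the eigenvalues
   counted with algebraic multiplicity) *)
Definition is_eigseq n (A : 'M[R[i]]_n) (s : seq R) : Prop :=
  sorted (fun x y => y <= x) s /\
  char_poly A = \prod_(x <- s) ('X - (x%:C)%:P).

(* the (decreasingly ordered) eigenvalues of A; for Hermitian A such a list
   exists and is unique *)
Definition eigseq n (A : 'M[R[i]]_n) : seq R :=
  epsilon (inhabits [::]) (is_eigseq A).

(* lambda_j(A), 1-indexed: lam A 1 is the largest eigenvalue *)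
Definition lam n (A : 'M[R[i]]_n) (j : nat) : R := nth 0 (eigseq A) j.-1.

Definition hadamard m n (A B : 'M[R[i]]_(m, n)) : 'M[R[i]]_(m, n) :=
  \matrix_(p, q) (A p q * B p q).
End Defs.

From Pilot Require Import Defs.
From HB Require Import structures.
From mathcomp Require Import all_boot all_order all_algebra.
From mathcomp Require Import complex.
From mathcomp Require Import reals sequences exp.
From mathcomp Require Import zify ring.
From Stdlib Require Import ClassicalEpsilon.
Set Implicit Arguments. Unset Strict Implicit. Unset Printing Implicit Defensive.
Import Order.TTheory GRing.Theory Num.Theory.
Local Open Scope ring_scope.

(** Diagonalise [A = P^* diag(a) P] and [B = Q^* diag(b) Q] with unitary [P],
    [Q].  Then [A o B = sum_(i,j) a_i b_j w_ij^* w_ij], where [w_ij] is the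
    entrywise product of row [i] of [P] and row [j] of [Q], and these [n^2]
    vectors form a Parseval frame: [sum_(i,j) |<u, w_ij>|^2 = |u|^2].  Hence on
    the orthogonal complement of the [s k] vectors [w_ij] with
    [a_i > lambda_(s+1)(A)] and [b_j > lambda_(k+1)(B)] the quadratic form of
    [A o B] is at most [max (lambda_(s+1)(A) lambda_1(B), lambda_1(A)
    lambda_(k+1)(B))] times [|u|^2], and the min-max principle bounds
    [lambda_(sk+1)(A o B)] by that maximum.  For [k = k*] the hypotheses make
    both products [O(exp (- min(alpha, c') (s+1)))], using [W >= s+1] for the
    tail of [B]. *)

Section DecreasingSeq.
Variable R : realDomainType.
Implicit Types (s : seq R) (t : R).

Lemma count_gt_le_of_nth_le s m t :
  sorted (fun x y => y <= x) s -> nth 0 s m <= t ->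
  (count (fun x : R => (t < x)%R) s <= m)%N.
Proof.
elim: s m => [|x s IHs] m //= s_sorted.
have le_x : all (fun y => y <= x) s.
  exact: order_path_min (fun a b c h1 h2 => le_trans h2 h1) s_sorted.
case: m => [|m] /= le_t.
  rewrite ltNge le_t add0n leqn0 -(count_pred0 s); apply/eqP/eq_in_count.
  by move=> y /(allP le_x) le_yx /=; rewrite ltNge (le_trans le_yx le_t).
by have := IHs m (path_sorted s_sorted) le_t; case: (t < x) => /=; lia.
Qed.

Lemma nth_le_of_count_gt_le s m t :
  sorted (fun x y => y <= x) s -> 0 <= t ->
  (count (fun x : R => (t < x)%R) s <= m)%N -> nth 0 s m <= t.
Proof.
elim: s m => [|x s IHs] m //= s_sorted t_ge0; first by rewrite nth_nil.
have le_x : all (fun y => y <= x) s.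
  exact: order_path_min (fun a b c h1 h2 => le_trans h2 h1) s_sorted.
have [le_xt|lt_tx] := leP x t; case: m => [|m] //= cnt.
- have [lt_ms|le_sm] := ltnP m (size s); last by rewrite nth_default.
  exact: le_trans (allP le_x _ (mem_nth 0 lt_ms)) le_xt.
- exact: IHs (path_sorted s_sorted) t_ge0 cnt.
Qed.

End DecreasingSeq.

Lemma left_kernel_neq0 (F : fieldType) m n (X : 'M[F]_(m, n)) :
  (n < m)%N -> exists2 c : 'rV_m, c != 0 & c *m X = 0.
Proof.
move=> lt_nm; have : kermx X != 0.
  by rewrite kermx_eq0; apply/eqP => rkX; have := rank_leq_col X; lia.
by case/rowV0Pn => c /sub_kermxP cX c_neq0; exists c.
Qed.

Lemma ler_expR_Nmul (R : realType) (a b x y : R) :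
  0 <= a -> a <= b -> 0 <= x -> x <= y -> expR (- b * y) <= expR (- a * x).
Proof.
move=> a_ge0 le_ab x_ge0 le_xy; rewrite ler_expR !mulNr lerN2.
exact: le_trans (ler_wpM2l a_ge0 le_xy)
                (ler_wpM2r (le_trans x_ge0 le_xy) le_ab).
Qed.

Local Open Scope complex_scope.
Local Open Scope sesquilinear_scope.

Section Spectrum.
Variable R : realType.

Lemma adjmxE m n (M : 'M[R[i]]_(m, n)) : adjmx M = M ^t*.
Proof. by rewrite /adjmx map_trmx. Qed.

Lemma adjmxK m n (M : 'M[R[i]]_(m, n)) : adjmx (adjmx M) = M.
Proof. by rewrite !adjmxE trmxCK. Qed.

Lemma adjmxM m n p (M : 'M[R[i]]_(m, n)) (N : 'M[R[i]]_(n, p)) :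
  adjmx (M *m N) = adjmx N *m adjmx M.
Proof. by rewrite /adjmx map_mxM trmx_mul. Qed.

Lemma adjmx_dotC n (u v : 'rV[R[i]]_n) :
  (v *m adjmx u) 0 0 = Num.conj ((u *m adjmx v) 0 0).
Proof.
rewrite !mxE rmorph_sum; apply: eq_bigr => k _.
by rewrite /adjmx !mxE rmorphM /= conjCK mulrC.
Qed.

Lemma adjmx_dotE n (u : 'rV[R[i]]_n) :
  (u *m adjmx u) 0 0 = \sum_k u 0 k * Num.conj (u 0 k).
Proof. by rewrite !mxE; apply: eq_bigr => k _; rewrite !mxE. Qed.

Lemma diag_formE n (u d : 'rV[R[i]]_n) :
  (u *m diag_mx d *m adjmx u) 0 0 = \sum_k d 0 k * (u 0 k * Num.conj (u 0 k)).
Proof.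
rewrite mul_mx_diag !mxE; apply: eq_bigr => k _.
by rewrite !mxE mulrAC mulrC.
Qed.

Definition ev n (A : 'M[R[i]]_n) (i : 'I_n) : R :=
  complex.Re (spectral_diag A 0 i).

Lemma hermitian_spectral n (A : 'M[R[i]]_n) (P := spectralmx A) :
  Defs.hermitian A ->
  [/\ P *m adjmx P = 1%:M, adjmx P *m P = 1%:M &
      A = adjmx P *m diag_mx (\row_i (ev A i)%:C) *m P].
Proof.
rewrite /Defs.hermitian adjmxE => adjA.
have P_unitary : P \is unitarymx := spectral_unitarymx A.
have P_unit := unitarymx_unit P_unitary.
have PPt : P *m adjmx P = 1%:M by rewrite adjmxE; apply/unitarymxP.
have PtP : adjmx P *m P = 1%:M by rewrite adjmxE -invmx_unitary // mulVmx.
split => //.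
have A_herm : A \is hermsymmx.
  by apply/is_hermitianmxP; rewrite expr0 scale1r adjA.
have /mxOverP real_sp := hermitian_spectral_diag_real A_herm.
have -> : \row_i (ev A i)%:C = spectral_diag A.
  by apply/rowP => i; rewrite mxE; exact: RRe_real (real_sp 0 i).
rewrite adjmxE -invmx_unitary //; apply/orthomx_spectralP.
by apply/normalmxP; rewrite adjA.
Qed.

Lemma char_poly_unitary_conj n (P D : 'M[R[i]]_n) :
  adjmx P *m P = 1%:M -> char_poly (adjmx P *m D *m P) = char_poly D.
Proof.
move=> PtP; rewrite /char_poly /char_poly_mx.
set f := map_mx (@polyC R[i]).
have -> : 'X%:M - f (adjmx P *m D *m P) = f (adjmx P) *m ('X%:M - f D) *m f P.
  rewrite /f !map_mxM mulmxBr mulmxBl; congr (_ - _).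
  by rewrite scalar_mxC -mulmxA -map_mxM PtP map_mx1 mulmx1.
by rewrite !det_mulmx mulrAC -det_mulmx -map_mxM PtP /f map_mx1 det1 mul1r.
Qed.

Lemma char_poly_diag n (d : 'rV[R[i]]_n) :
  char_poly (diag_mx d) = \prod_(i < n) ('X - (d 0 i)%:P).
Proof.
rewrite char_poly_trig; last first.
  apply/is_trig_mxP => i j lt_ij; rewrite mxE.
  by rewrite (_ : (i == j) = false) ?mulr0n // -val_eqE ltn_eqF.
by apply: eq_bigr => i _; rewrite mxE eqxx mulr1n.
Qed.

Lemma eigseq_spectral n (A : 'M[R[i]]_n) : Defs.hermitian A ->
  sorted (fun x y => y <= x) (eigseq A) /\
  perm_eq (eigseq A) [seq ev A i | i <- enum 'I_n].
Proof.
move=> A_herm; have [_ PtP A_spec] := hermitian_spectral A_herm.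
set evs := [seq ev A i | i <- enum 'I_n].
pose poly_of (s : seq R) := \prod_(x <- s) ('X - (x%:C)%:P) : {poly R[i]}.
have charA : char_poly A = poly_of evs.
  rewrite {1}A_spec char_poly_unitary_conj // char_poly_diag /poly_of.
  by rewrite big_map big_enum; apply: eq_bigr => i _; rewrite mxE.
have [sorted_eig char_eig] : is_eigseq A (eigseq A).
  apply: (epsilon_spec (inhabits [::]) (is_eigseq A)).
  exists (sort (fun x y => y <= x) evs); split.
    by apply: sort_sorted => x y; exact: le_total.
  by rewrite charA; apply: perm_big; rewrite perm_sym perm_sort.
split => //.
have ReK (s : seq R) : map (@complex.Re R) (map (fun x => x%:C) s) = s.
  by elim: s => //= x s ->.
rewrite -[eigseq _]ReK -[evs]ReK; apply/perm_map/prod_XsubC_eq.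
by rewrite [LHS]big_map -char_eig charA [RHS]big_map.
Qed.

Section HermitianEigenvalues.
Variables (n : nat) (A : 'M[R[i]]_n).
Hypothesis A_herm : Defs.hermitian A.

Lemma count_eigseq (p : pred R) : count p (eigseq A) = #|[set i | p (ev A i)]|.
Proof.
have [_ /permP ->] := eigseq_spectral A_herm.
rewrite count_map cardsE cardE /enum_mem size_filter.
by rewrite (@eq_filter _ _ predT) // filter_predT; apply: eq_count.
Qed.

Lemma size_eigseq : size (eigseq A) = n.
Proof.
have [_ /perm_size ->] := eigseq_spectral A_herm.
by rewrite size_map size_enum_ord.
Qed.

Lemma lam_eq0 j : (n < j)%N -> lam A j = 0.
Proof. by move=> lt_nj; rewrite /lam nth_default // size_eigseq; lia. Qed.

Lemma card_ev_gt_le t m :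
  lam A m.+1 <= t -> (#|[set i | (t < ev A i)%R]| <= m)%N.
Proof.
rewrite -(count_eigseq (fun x => (t < x)%R)); apply: count_gt_le_of_nth_le.
exact: (eigseq_spectral A_herm).1.
Qed.

Lemma lam_le_of_card_ev_gt t m : 0 <= t ->
  (#|[set i | (t < ev A i)%R]| <= m)%N -> lam A m.+1 <= t.
Proof.
rewrite -(count_eigseq (fun x => (t < x)%R)); apply: nth_le_of_count_gt_le.
exact: (eigseq_spectral A_herm).1.
Qed.

Lemma ev_le_lam1 i : ev A i <= lam A 1.
Proof.
have /card_ev_gt_le := lexx (lam A 1).
rewrite leqn0 cards_eq0 => /eqP /setP /(_ i); rewrite !inE => /negbT.
by rewrite -leNgt.
Qed.

End HermitianEigenvalues.

Lemma ev_ge0 n (A : 'M[R[i]]_n) : psd A -> forall i, 0 <= ev A i.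
Proof.
move=> [A_herm form_ge0] i; have [PPt _ A_spec] := hermitian_spectral A_herm.
move: (spectralmx A) PPt A_spec => P PPt A_spec; set u := row i P.
have := form_ge0 (adjmx u); rewrite adjmxK.
have -> : u *m A *m adjmx u =
    delta_mx 0 i *m diag_mx (\row_l (ev A l)%:C) *m adjmx (delta_mx 0 i).
  have uPt : u *m adjmx P = delta_mx 0 i by rewrite -row_mul PPt row1.
  have Pu : P *m adjmx u = adjmx (delta_mx 0 i) by rewrite -uPt adjmxM adjmxK.
  by rewrite {1}A_spec !mulmxA uPt -mulmxA Pu.
rewrite diag_formE (bigD1 i) //= big1 ?addr0; last first.
  by move=> k /negbTE ne_ki; rewrite !mxE ne_ki mul0r mulr0.
by rewrite !mxE !eqxx /= conjC1 !mulr1 ler0c.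
Qed.

Lemma lam_ge0 n (A : 'M[R[i]]_n) j : psd A -> 0 <= lam A j.
Proof.
move=> A_psd; have [_ perm_evs] := eigseq_spectral A_psd.1; rewrite /lam.
have [lt_js|le_sj] := ltnP j.-1 (size (eigseq A)); last by rewrite nth_default.
have := mem_nth 0 lt_js; rewrite (perm_mem perm_evs) => /mapP [i _ ->].
exact: ev_ge0.
Qed.

Lemma lam_le_tail n (A : 'M[R[i]]_n) k :
  psd A -> lam A k.+1 <= \sum_(k.+1 <= j < n.+1) lam A j.
Proof.
move=> A_psd; have [lt_kn|le_nk] := ltnP k n.
  rewrite big_ltn ?ltnS // lerDl; apply: sumr_ge0 => j _; exact: lam_ge0.
rewrite (lam_eq0 A_psd.1) ?ltnS //; apply: sumr_ge0 => j _; exact: lam_ge0.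
Qed.

Lemma diag_form_le_eq0 n (h : 'I_n -> R) (M : R) (w : 'rV[R[i]]_n) :
  (forall l, h l <= M -> w 0 l = 0) ->
  (w *m diag_mx (\row_l (h l)%:C) *m adjmx w) 0 0
    <= M%:C * (w *m adjmx w) 0 0 ->
  w = 0.
Proof.
move=> w_supp; rewrite diag_formE adjmx_dotE mulr_sumr -subr_le0 -sumrB.
pose F l := ((h l)%:C - M%:C) * (w 0 l * Num.conj (w 0 l)).
rewrite (eq_bigr F) => [le_sum0|l _]; last by rewrite /F mxE mulrBl.
have F_ge0 l : 0 <= F l.
  rewrite /F; have [/w_supp ->|lt_Mh] := leP (h l) M.
    by rewrite mul0r mulr0.
  by apply: mulr_ge0; [rewrite subr_ge0 lecR ltW | exact: mul_conjC_ge0].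
have sumF0 : \sum_l F l = 0 by apply: le_anti; rewrite le_sum0 sumr_ge0.
have F_eq0 := psumr_eq0P (fun l _ => F_ge0 l) sumF0.
apply/rowP => l; rewrite mxE; have [/w_supp //|lt_Mh] := leP (h l) M.
move: (F_eq0 l isT) => /eqP; rewrite mulf_eq0 mul_conjC_eq0 subr_eq0.
by rewrite (inj_eq (@complexI R)) gt_eqF //= => /eqP.
Qed.

Lemma card_ev_gt_le_constraints n (H P : 'M[R[i]]_n) (h : 'I_n -> R)
    (I : finType) (Z : {set I}) (g : I -> 'rV[R[i]]_n) (M : R) :
  P *m adjmx P = 1%:M -> H = adjmx P *m diag_mx (\row_l (h l)%:C) *m P ->
  (forall u : 'rV[R[i]]_n, (forall z, z \in Z -> (u *m adjmx (g z)) 0 0 = 0) ->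
     (u *m H *m adjmx u) 0 0 <= M%:C * (u *m adjmx u) 0 0) ->
  (#|[set l | (M < h l)%R]| <= #|Z|)%N.
Proof.
move=> PPt H_spec H_form; set T := [set l | _].
rewrite leqNgt; apply/negP => ltZT.
(* Counting dimensions, some nonzero [w] supported on [T] makes [w *m P]
   orthogonal to every [g z]; the form of [H] at [w *m P] then exceeds [M]. *)
pose S : 'M[R[i]]_(#|T|, n) := rowsub enum_val 1%:M.
pose G : 'M[R[i]]_(#|Z|, n) := \matrix_(r, k) g (enum_val r) 0 k.
have [c c_neq0 cX] := left_kernel_neq0 (S *m P *m adjmx G) ltZT.
pose w := c *m S.
have wS a : w 0 (enum_val a) = c 0 a.
  rewrite !mxE (bigD1 a) //= big1 ?addr0 => [|b ne_ba]; rewrite !mxE.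
    by rewrite eqxx mulr1.
  by rewrite (inj_eq enum_val_inj) (negbTE ne_ba) mulr0.
have w_supp l : h l <= M -> w 0 l = 0.
  move=> le_hM; rewrite !mxE big1 // => b _; rewrite !mxE.
  have : enum_val b \in T := enum_valP b.
  case: eqP => [-> | _ _]; last by rewrite mulr0.
  by rewrite inE ltNge le_hM.
have /negP : w != 0.
  by apply: contra_neq c_neq0 => w0; apply/rowP => a; rewrite -wS w0 !mxE.
apply; apply/eqP/(diag_form_le_eq0 w_supp).
have w_perp z : z \in Z -> (w *m P *m adjmx (g z)) 0 0 = 0.
  move=> Zz; have /matrixP/(_ 0 (enum_rank_in Zz z)) := cX.
  rewrite !mulmxA [RHS]mxE => <-; rewrite [LHS]mxE [RHS]mxE.
  by apply: eq_bigr => k _; congr (_ * _); rewrite /adjmx !mxE enum_rankK_in.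
have PtwP : P *m adjmx (w *m P) = adjmx w by rewrite adjmxM mulmxA PPt mul1mx.
clearbody w; have := H_form _ w_perp.
by rewrite H_spec !mulmxA -(mulmxA w P) PPt mulmx1 -!mulmxA PtwP !mulmxA.
Qed.

Lemma hadamard_hermitian n (A B : 'M[R[i]]_n) :
  Defs.hermitian A -> Defs.hermitian B -> Defs.hermitian (hadamard A B).
Proof.
move=> adjA adjB; apply/matrixP => p q.
have /matrixP/(_ p q) := adjA; have /matrixP/(_ p q) := adjB.
by rewrite /adjmx /hadamard !mxE => <- <-; rewrite rmorphM.
Qed.

Lemma spectral_entry n (P : 'M[R[i]]_n) (d : 'rV[R[i]]_n) p q :
  (adjmx P *m diag_mx d *m P) p q = \sum_i Num.conj (P i p) * d 0 i * P i q.
Proof. by rewrite mul_mx_diag !mxE; apply: eq_bigr => i _; rewrite !mxE. Qed.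

Section HadamardSpectral.
Variables (n : nat) (P Q : 'M[R[i]]_n).

Lemma hadamard_spectral (a b : 'rV[R[i]]_n) :
  hadamard (adjmx P *m diag_mx a *m P) (adjmx Q *m diag_mx b *m Q) =
  \sum_i \sum_j (a 0 i * b 0 j) *:
    (adjmx (hadamard (row i P) (row j Q)) *m hadamard (row i P) (row j Q)).
Proof.
apply/matrixP => p q; rewrite /hadamard mxE !spectral_entry summxE mulr_suml.
apply: eq_bigr => i _; rewrite summxE mulr_sumr; apply: eq_bigr => j _.
by rewrite !mxE big_ord1 /adjmx !mxE rmorphM /=; ring.
Qed.

Lemma hadamard_spectral_form (a b u : 'rV[R[i]]_n) :
  (u *m hadamard (adjmx P *m diag_mx a *m P) (adjmx Q *m diag_mx b *m Q)
     *m adjmx u) 0 0 =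
  \sum_i \sum_j a 0 i * b 0 j *
    ((u *m adjmx (hadamard (row i P) (row j Q))) 0 0 *
     Num.conj ((u *m adjmx (hadamard (row i P) (row j Q))) 0 0)).
Proof.
rewrite hadamard_spectral mulmx_sumr mulmx_suml summxE; apply: eq_bigr => i _.
rewrite mulmx_sumr mulmx_suml summxE; apply: eq_bigr => j _.
rewrite -scalemxAr -scalemxAl mxE; congr (_ * _).
by rewrite !mulmxA -(mulmxA (u *m _)) mxE big_ord1 adjmx_dotC conjCK.
Qed.

Lemma hadamard_rows_parseval (u : 'rV[R[i]]_n) :
  adjmx P *m P = 1%:M -> adjmx Q *m Q = 1%:M ->
  \sum_i \sum_j ((u *m adjmx (hadamard (row i P) (row j Q))) 0 0 *
     Num.conj ((u *m adjmx (hadamard (row i P) (row j Q))) 0 0)) =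
  (u *m adjmx u) 0 0.
Proof.
move=> PtP QtQ; rewrite exchange_big /=.
pose z j : 'rV[R[i]]_n := \row_q (u 0 q * Num.conj (Q j q)).
have sum_i j : \sum_i ((u *m adjmx (hadamard (row i P) (row j Q))) 0 0 *
     Num.conj ((u *m adjmx (hadamard (row i P) (row j Q))) 0 0)) =
    (z j *m adjmx (z j)) 0 0.
  have -> : z j *m adjmx (z j) = (z j *m adjmx P) *m adjmx (z j *m adjmx P).
    by rewrite adjmxM adjmxK mulmxA -(mulmxA (z j)) PtP mulmx1.
  rewrite adjmx_dotE; apply: eq_bigr => i _.
  suff -> : (u *m adjmx (hadamard (row i P) (row j Q))) 0 0 =
            (z j *m adjmx P) 0 i by [].
  by rewrite !mxE; apply: eq_bigr => k _; rewrite /adjmx !mxE rmorphM /=; ring.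
rewrite (eq_bigr _ (fun j _ => sum_i j)) adjmx_dotE.
under eq_bigr => j _ do rewrite adjmx_dotE.
rewrite exchange_big /=; apply: eq_bigr => q _.
have /matrixP/(_ q q) := QtQ; rewrite !mxE eqxx mulr1n => Qq.
rewrite -[RHS]mulr1 -Qq mulr_sumr; apply: eq_bigr => j _.
by rewrite /adjmx !mxE rmorphM /= conjCK; ring.
Qed.

Lemma hadamard_spectral_form_le (a b : 'I_n -> R) (SA SB : {set 'I_n}) (M : R)
    (u : 'rV[R[i]]_n) :
  adjmx P *m P = 1%:M -> adjmx Q *m Q = 1%:M ->
  (forall i j, ~~ ((i \in SA) && (j \in SB)) -> a i * b j <= M) ->
  (forall z, z \in setX SA SB ->
     (u *m adjmx (hadamard (row z.1 P) (row z.2 Q))) 0 0 = 0) ->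
  (u *m hadamard (adjmx P *m diag_mx (\row_i (a i)%:C) *m P)
      (adjmx Q *m diag_mx (\row_j (b j)%:C) *m Q) *m adjmx u) 0 0
   <= M%:C * (u *m adjmx u) 0 0.
Proof.
move=> PtP QtQ le_abM perp_SAB.
rewrite hadamard_spectral_form -(hadamard_rows_parseval u PtP QtQ) mulr_sumr.
apply: ler_sum => i _; rewrite mulr_sumr; apply: ler_sum => j _.
have [inSAB|notinSAB] := boolP ((i \in SA) && (j \in SB)).
  by rewrite (perp_SAB (i, j)) ?in_setX // mul0r !mulr0.
apply: ler_wpM2r; first exact: mul_conjC_ge0.
by rewrite !mxE -rmorphM lecR le_abM.
Qed.

End HadamardSpectral.

Lemma lam_hadamard_le n (A B : 'M[R[i]]_n) s k m :
  psd A -> psd B -> (s * k <= m)%N ->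
  lam (hadamard A B) m.+1
    <= Num.max (lam A s.+1 * lam B 1) (lam A 1 * lam B k.+1).
Proof.
move=> A_psd B_psd le_skm; have [A_herm B_herm] := (A_psd.1, B_psd.1).
have [_ PtP A_spec] := hermitian_spectral A_herm.
have [_ QtQ B_spec] := hermitian_spectral B_herm.
have AB_herm := hadamard_hermitian A_herm B_herm.
have [HHt _ AB_spec] := hermitian_spectral AB_herm.
set M := Num.max _ _.
have M_ge0 : 0 <= M by rewrite le_max mulr_ge0 ?lam_ge0.
set SA := [set i | (lam A s.+1 < ev A i)%R].
set SB := [set j | (lam B k.+1 < ev B j)%R].
have cardSA : (#|SA| <= s)%N := card_ev_gt_le A_herm (lexx _).
have cardSB : (#|SB| <= k)%N := card_ev_gt_le B_herm (lexx _).
apply: (lam_le_of_card_ev_gt AB_herm M_ge0).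
apply: leq_trans (leq_trans (leq_mul cardSA cardSB) le_skm); rewrite -cardsX.
apply: (card_ev_gt_le_constraints
  (g := fun z => hadamard (row z.1 (spectralmx A)) (row z.2 (spectralmx B)))
  HHt AB_spec) => u u_perp.
rewrite {1}A_spec {1}B_spec.
apply: (hadamard_spectral_form_le (SA := SA) (SB := SB)) => // i j.
have [a_ge0 b_ge0] := (ev_ge0 A_psd i, ev_ge0 B_psd j).
rewrite negb_and !inE -!leNgt => /orP [le_ai|le_bj]; rewrite le_max.
  by apply/orP; left; apply: ler_pM => //; exact: ev_le_lam1.
by apply/orP; right; apply: ler_pM => //; exact: ev_le_lam1.
Qed.

End Spectrum.

Local Close Scope sesquilinear_scope.
Local Close Scope complex_scope.

Section HadamardDecay.
Variables (R : realType) (C alpha C' c' a : R) (W k : nat) (A B : 'M[R[i]]_W).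
Hypotheses (C_gt0 : 0 < C) (a_ge0 : 0 <= a).
Hypotheses (le_a_alpha : a <= alpha) (le_a_c' : a <= c') (k_ge1 : (1 <= k)%N).
Hypotheses (A_psd : psd A) (B_psd : psd B).
Hypothesis A_decay :
  forall j : nat, (1 <= j)%N -> lam A j <= C * expR (- alpha * j%:R).
Hypothesis B_head : forall j : nat, (1 <= j <= k)%N -> lam B j <= C'.
Hypothesis B_tail : \sum_(k.+1 <= j < W.+1) lam B j <= expR (- c' * W%:R).

Lemma lam_hadamard_decay s m : (s * k <= m)%N -> (s < W)%N ->
  lam (hadamard A B) m.+1 <= C * (C' + 1) * expR (- a * s.+1%:R).
Proof.
move=> le_skm lt_sW; set e := expR _.
have lamA_s : lam A s.+1 <= C * e.
  apply: le_trans (@A_decay s.+1 isT) (ler_wpM2l (ltW C_gt0) _).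
  exact: ler_expR_Nmul a_ge0 le_a_alpha (ler0n _ _) (lexx _).
have lamA_1 : lam A 1 <= C.
  apply: le_trans (@A_decay 1%N isT) _; rewrite ger_pMr // expR_le1 mulr1.
  by rewrite oppr_le0 (le_trans a_ge0).
have lamB_1 : lam B 1 <= C' by apply: B_head; rewrite leqnn k_ge1.
have lamA_ge0 j : 0 <= lam A j := lam_ge0 j A_psd.
have lamB_ge0 j : 0 <= lam B j := lam_ge0 j B_psd.
have lamB_k : lam B k.+1 <= e.
  apply: le_trans (lam_le_tail _ B_psd) (le_trans B_tail _).
  by apply: ler_expR_Nmul; rewrite ?ler_nat.
have Ce_ge0 : 0 <= C * e by rewrite mulr_ge0 ?expR_ge0 ?ltW.
have C'_ge0 : 0 <= C' := le_trans (lamB_ge0 1%N) lamB_1.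
apply: le_trans (lam_hadamard_le A_psd B_psd le_skm) _.
rewrite (_ : C * (C' + 1) * e = C * e * C' + C * e); last by ring.
rewrite ge_max; apply/andP; split.
  apply: le_trans (ler_pM (lamA_ge0 _) (lamB_ge0 _) lamA_s lamB_1) _.
  by rewrite lerDl.
apply: le_trans (ler_pM (lamA_ge0 _) (lamB_ge0 _) lamA_1 lamB_k) _.
by rewrite lerDr mulr_ge0.
Qed.

End HadamardDecay.

Theorem mainTheorem9 (R : realType) (C alpha C' c' : R) :
  0 < C -> 0 < alpha -> 0 < C' -> 0 < c' ->
  exists K alpha' : R, 0 < K /\ 0 < alpha' /\
  forall (W kstar : nat) (A B : 'M[R[i]]_W),
    (1 <= W)%N -> (1 <= kstar <= W)%N ->
    psd A -> psd B ->
    (forall j : nat, (1 <= j)%N -> lam A j <= C * expR (- alpha * j%:R)) ->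
    (forall j : nat, (1 <= j <= kstar)%N -> lam B j <= C') ->
    \sum_(kstar.+1 <= j < W.+1) lam B j <= expR (- c' * W%:R) ->
    (forall s : nat, (1 <= s)%N -> (s * kstar + 1 <= W)%N ->
       lam (hadamard A B) (s * kstar + 1) <= K * expR (- alpha' * s%:R)) /\
    (forall k : nat, (kstar <= k <= W)%N ->
       lam (hadamard A B) k <= K * expR (- alpha' * (k %/ kstar)%:R)).
Proof.
move=> C_gt0 alpha_gt0 C'_gt0 c'_gt0; pose a := Num.min alpha c'.
have a_gt0 : 0 < a by rewrite lt_min alpha_gt0.
have [le_a_alpha le_a_c'] : a <= alpha /\ a <= c' by rewrite !ge_min !lexx orbT.
exists (C * (C' + 1)), a; split; first by rewrite mulr_gt0 ?addr_gt0.
split=> // W k A B _ /andP [k_ge1 _] A_psd B_psd A_decay B_head B_tail.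
have decay := lam_hadamard_decay C_gt0 (ltW a_gt0) le_a_alpha le_a_c' k_ge1
  A_psd B_psd A_decay B_head B_tail.
split=> [s _ le_skW | k0 /andP [le_kk0 le_k0W]].
  rewrite addn1; apply: le_trans (decay s _ (leqnn _) _) _; first by nia.
  apply: ler_wpM2l; first by rewrite ltW // mulr_gt0 ?addr_gt0.
  by apply: ler_expR_Nmul (ltW a_gt0) (lexx a) (ler0n _ _) _; rewrite ler_nat.
have q_gt0 : (0 < k0 %/ k)%N by rewrite divn_gt0.
have le_qk : (k0 %/ k * k <= k0)%N := leq_divM k0 k.
have := decay (k0 %/ k).-1 k0.-1; rewrite !prednK //; last by lia.
apply; nia.
Qed.
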